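(* Let $h\ge0$ and $i\le h$ be integers. Let $\Phi(z)=\sum_{n\ge0}c_nz^n$, where $c_n$ is the number of Deutsch paths of $n$ steps from $(0,0)$ to $(n,i)$ that never go above level $h$, with no lower boundary. Let $v=v(z)$ be the power series with $v(0)=0$ satisfying $z=\frac{v}{1+v+v^2}$. Then $$\Phi(z)=\frac{(1+v)^{-i-2}\,v\,(1-v^{h+1})(1+v+v^2)}{1-v}\quad\text{for } i<0,$$ $$\Phi(z)=\frac{v^{i}(1-v^{2-i+h})(1+v+v^2)}{(1-v)(1+v)^{i+2}}\quad\text{for } 0\le i\le h.$$
   Context: A Deutsch path is a lattice path whose steps are up-steps $(1,1)$ and down-steps $(1,-k)$ for any integer $k\ge1$. The series $v$ is given explicitly by $v=\frac{1-z-\sqrt{1-2z-3z^2}}{2z}$. *)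

From mathcomp Require Import all_boot all_order all_algebra.
Set Implicit Arguments. Unset Strict Implicit. Unset Printing Implicit Defensive.
Import Order.TTheory GRing.Theory Num.Theory.
Local Open Scope ring_scope.

Definition fps := nat -> rat.

Definition fps_C (c : rat) : fps := fun n => if n == 0%N then c else 0.
Definition fps_X : fps := fun n => if n == 1%N then 1 else 0.
Definition fps_add (f g : fps) : fps := fun n => f n + g n.
Definition fps_opp (f : fps) : fps := fun n => - f n.
Definition fps_sub (f g : fps) : fps := fps_add f (fps_opp g).
Definition fps_mul (f g : fps) : fps :=
  fun n => \sum_(k < n.+1) f k * g (n - k)%N.
Definition fps_pow (f : fps) (m : nat) : fps := iter m (fps_mul f) (fps_C 1).

(* Multiplicative inverse of a series with nonzero constant term:
   g 0 = 1 / f 0,  g n = - (1 / f 0) * sum_{k=1}^{n} f k * g (n - k). *)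
Fixpoint fps_inv_upto (f : fps) (n : nat) : seq rat :=
  match n with
  | 0%N => [:: (f 0%N)^-1]
  | m.+1 => let s := fps_inv_upto f m in
            rcons s (- (f 0%N)^-1 *
                     \sum_(k < m.+1) f k.+1 * nth 0 s (m - k)%N)
  end.
Definition fps_inv (f : fps) : fps := fun n => nth 0 (fps_inv_upto f n) n.
Definition fps_div (f g : fps) : fps := fps_mul f (fps_inv g).

Definition fps_zpow (f : fps) (z : int) : fps :=
  match z with
  | Posz m => fps_pow f m
  | Negz m => fps_pow (fps_inv f) m.+1
  end.

(* Deutsch paths: a path of n steps is the sequence of its vertical
   displacements; a step is an up-step (+1) or a down-step -k with k >= 1. *)
Definition deutsch_step (s : int) : bool := (s == 1) || (s <= -1).

Definition path_heights (p : seq int) : seq int := 0 :: scanl +%R 0 p.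

Definition bounded_deutsch_path (n : nat) (h i : int) (p : seq int) : bool :=
  [&& size p == n, all deutsch_step p,
      all (fun y => y <= h) (path_heights p) & \sum_(s <- p) s == i].

Definition is_count {T : eqType} (P : pred T) (x : rat) : Prop :=
  exists s : seq T, [/\ uniq s, (forall t, (t \in s) = P t) & x = (size s)%:R].

(* Measure the end point by its depth [t = h - i] below the ceiling. Splitting a path at
   its last step (an up-step from depth [t + 1], or a down-step from a depth [x < t])
   shows that the generating functions [A_t] of the paths ending at depth [t] satisfy
   [A_t = [t = h] + z (A_(t+1) + sum_(x < t) A_x)], a system that determines all their
   coefficients. The claimed series have the form [K N_t / D] with [K = 1 + v + v^2],
   [D = (1 - v) (1 + v)^(h+2)] and [N_t] a polynomial in [v]; since [z K = v], the system
   reduces, after differencing in [t], to polynomial identities in [v]. *)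

From HB Require Import structures.
From mathcomp Require Import all_boot all_order all_algebra.
From mathcomp Require Import boolp.
From mathcomp Require Import ring zify.
Import Order.TTheory GRing.Theory Num.Theory.
Local Open Scope ring_scope.

HB.instance Definition _ := gen_eqMixin fps.
HB.instance Definition _ := gen_choiceMixin fps.

Lemma fps_addA : associative fps_add.
Proof. by move=> f g k; apply: funext => n; rewrite /fps_add addrA. Qed.

Lemma fps_addC : commutative fps_add.
Proof. by move=> f g; apply: funext => n; rewrite /fps_add addrC. Qed.

Lemma fps_add0l : left_id (fps_C 0) fps_add.
Proof. by move=> f; apply: funext => n; rewrite /fps_add /fps_C; case: eqP; rewrite add0r. Qed.

Lemma fps_addNl : left_inverse (fps_C 0) fps_opp fps_add.
Proof. by move=> f; apply: funext => n; rewrite /fps_add /fps_opp /fps_C addNr; case: eqP. Qed.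

HB.instance Definition _ := GRing.isZmodule.Build fps fps_addA fps_addC fps_add0l fps_addNl.

(* Coefficient [n] of a Cauchy product only involves coefficients of index [<= n], so
   the ring laws of [fps_mul] are inherited from polynomials truncated at degree [n]. *)
Definition fps_trunc (n : nat) (f : fps) : {poly rat} := \poly_(i < n.+1) f i.

Lemma coef_fps_mul (f g : fps) n : fps_mul f g n = (fps_trunc n f * fps_trunc n g)`_n.
Proof.
rewrite coefM /fps_mul; apply: eq_bigr => k _.
by rewrite !coef_poly ltnS leq_ord ltnS leq_subr.
Qed.

Lemma eq_coefM (R : nzRingType) (p p' q q' : {poly R}) n :
    (forall j, (j <= n)%N -> p`_j = p'`_j) -> (forall j, (j <= n)%N -> q`_j = q'`_j) ->
  (p * q)`_n = (p' * q')`_n.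
Proof.
move=> eq_p eq_q; rewrite !coefM; apply: eq_bigr => k _.
by rewrite eq_p ?eq_q ?leq_subr // -ltnS.
Qed.

Lemma coef_fps_trunc_mul (f g : fps) n j : (j <= n)%N ->
  (fps_trunc n (fps_mul f g))`_j = (fps_trunc n f * fps_trunc n g)`_j.
Proof.
move=> jn; rewrite coef_poly ltnS jn coef_fps_mul.
by apply: eq_coefM => l lj; rewrite !coef_poly !ltnS lj (leq_trans lj jn).
Qed.

Lemma fps_mulA : associative fps_mul.
Proof.
move=> f g k; apply: funext => n; rewrite !coef_fps_mul.
rewrite (@eq_coefM _ _ (fps_trunc n f) _ (fps_trunc n g * fps_trunc n k)) //;
  last by move=> j jn; rewrite coef_fps_trunc_mul.
rewrite [RHS](@eq_coefM _ _ (fps_trunc n f * fps_trunc n g) _ (fps_trunc n k)) //;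
  last by move=> j jn; rewrite coef_fps_trunc_mul.
by rewrite mulrA.
Qed.

Lemma fps_mulC : commutative fps_mul.
Proof. by move=> f g; apply: funext => n; rewrite !coef_fps_mul mulrC. Qed.

Lemma fps_mul1l : left_id (fps_C 1) fps_mul.
Proof.
move=> f; apply: funext => n; rewrite /fps_mul big_ord_recl /fps_C /= mul1r subn0.
by rewrite big1 ?addr0 // => k _; rewrite mul0r.
Qed.

Lemma fps_mulDl : left_distributive fps_mul fps_add.
Proof.
move=> f g k; apply: funext => n; rewrite /fps_mul /fps_add -big_split /=.
by apply: eq_bigr => j _; rewrite mulrDl.
Qed.

Lemma fps_oner_neq0 : fps_C 1 != fps_C 0.
Proof. by apply/eqP => /(congr1 (fun f : fps => f 0%N)); rewrite /fps_C /=; apply/eqP. Qed.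

HB.instance Definition _ :=
  GRing.Zmodule_isComNzRing.Build fps fps_mulA fps_mulC fps_mul1l fps_mulDl fps_oner_neq0.

Lemma size_fps_inv_upto (f : fps) n : size (fps_inv_upto f n) = n.+1.
Proof. by elim: n => [|n IH] //=; rewrite size_rcons IH. Qed.

Lemma nth_fps_inv_upto (f : fps) n m k : (k <= n <= m)%N ->
  nth 0 (fps_inv_upto f m) k = nth 0 (fps_inv_upto f n) k.
Proof.
case/andP=> kn; elim: m => [|m IH]; first by rewrite leqn0 => /eqP->.
rewrite leq_eqVlt => /orP[/eqP->//|]; rewrite ltnS => nm.
by rewrite /= nth_rcons size_fps_inv_upto ltnS (leq_trans kn nm) IH.
Qed.

Lemma fps_invS (f : fps) n :
  fps_inv f n.+1 = - (f 0%N)^-1 * \sum_(k < n.+1) f k.+1 * fps_inv f (n - k)%N.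
Proof.
rewrite /fps_inv /= nth_rcons size_fps_inv_upto ltnn eqxx; congr (_ * _).
apply: eq_bigr => k _; congr (_ * _).
by rewrite (@nth_fps_inv_upto f (n - k) n) // leqnn leq_subr.
Qed.

Lemma coef0_fpsM (f g : fps) : (f * g) 0%N = f 0%N * g 0%N.
Proof. exact: big_ord1. Qed.

Lemma fps_mul_inv (f : fps) : f 0%N != 0 -> f * fps_inv f = 1.
Proof.
move=> f0; apply: funext => -[|n]; first by rewrite coef0_fpsM mulfV.
rewrite [LHS]/(fps_mul _ _ _) big_ord_recl subn0 fps_invS mulrA mulrN mulfV // mulN1r.
by rewrite addNr /GRing.one /= /fps_C.
Qed.

Definition fps_unit : {pred fps} := fun f => f 0%N != 0.

(* The unit-ring interface requires [x^-1 = x] outside the units, where [fps_inv] is junk. *)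
Definition fps_inv_ext (f : fps) : fps := if f 0%N != 0 then fps_inv f else f.

Lemma fps_mulVr : {in fps_unit, left_inverse 1 fps_inv_ext *%R}.
Proof. by move=> f f0; rewrite /fps_inv_ext ifT // mulrC fps_mul_inv. Qed.

Lemma fps_unitPl (f g : fps) : g * f = 1 -> fps_unit f.
Proof.
move/(congr1 (fun f : fps => f 0%N)); rewrite coef0_fpsM /fps_unit.
by apply: contra_eqN => /eqP->; rewrite mulr0 eq_sym oner_neq0.
Qed.

Lemma fps_inv_out : {in [predC fps_unit], fps_inv_ext =1 id}.
Proof. by move=> f; rewrite inE => fN; rewrite /fps_inv_ext ifN. Qed.

HB.instance Definition _ := GRing.ComNzRing_hasMulInverse.Build fps fps_mulVr fps_unitPl fps_inv_out.

Lemma unit_fpsE (f : fps) : (f \is a GRing.unit) = (f 0%N != 0).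
Proof. by []. Qed.

Lemma coef_fps0 n : (0 : fps) n = 0.
Proof. by rewrite /GRing.zero /= /fps_C; case: (n == 0%N). Qed.

Lemma coef_fps1 n : (1 : fps) n = (n == 0%N)%:R.
Proof. by rewrite /GRing.one /= /fps_C; case: (n == 0%N). Qed.

Lemma coef_fps_natr (m : nat) n : (m%:R : fps) n = (n == 0%N)%:R * m%:R.
Proof.
elim: m => [|m IH]; first by rewrite mulr0n coef_fps0 mulr0.
by rewrite !mulrS [LHS]/(fps_add _ _ n) IH coef_fps1 mulrDr mulr1.
Qed.

Lemma coef_fps_sum (I : Type) (r : seq I) (P : pred I) (F : I -> fps) n :
  (\sum_(i <- r | P i) F i) n = \sum_(i <- r | P i) F i n.
Proof. by apply: (big_morph (fun f : fps => f n)) => //; rewrite coef_fps0. Qed.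

Lemma coef_fps_mulX0 (f : fps) : (fps_X * f) 0%N = 0.
Proof. by rewrite coef0_fpsM mul0r. Qed.

Lemma coef_fps_mulXS (f : fps) n : (fps_X * f) n.+1 = f n.
Proof.
rewrite [LHS]/(fps_mul _ _ _) 2!big_ord_recl /fps_X /= mul0r add0r mul1r subSS subn0.
by rewrite big1 ?addr0 // => k _; rewrite mul0r.
Qed.

Lemma fps_powE (f : fps) m : fps_pow f m = f ^+ m.
Proof. by elim: m => [|m IH] //; rewrite exprS -IH. Qed.

Lemma fps_invE (f : fps) : f \is a GRing.unit -> fps_inv f = f^-1.
Proof. by rewrite unit_fpsE => f0; rewrite /GRing.inv /= /fps_inv_ext f0. Qed.

Lemma fps_divE (f g : fps) : g \is a GRing.unit -> fps_div f g = f / g.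
Proof. by move=> g0; rewrite /fps_div fps_invE. Qed.

Lemma fps_zpow_nat (f : fps) (n : nat) : fps_zpow f n = f ^+ n.
Proof. exact: fps_powE. Qed.

Lemma fps_zpowE (f : fps) (z : int) : f \is a GRing.unit -> fps_zpow f z = f ^ z.
Proof. by move=> f0; case: z => m; rewrite /fps_zpow fps_powE // fps_invE // exprVn. Qed.

Lemma coef_fpsD (f g : fps) n : (f + g) n = f n + g n.
Proof. by []. Qed.

Lemma coef_fpsN (f : fps) n : (- f) n = - f n.
Proof. by []. Qed.

Lemma fps_mulE (f g : fps) : fps_mul f g = f * g.
Proof. by []. Qed.

Lemma fps_addE (f g : fps) : fps_add f g = f + g.
Proof. by []. Qed.

Lemma fps_subE (f g : fps) : fps_sub f g = f - g.
Proof. by []. Qed.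

Lemma fps_C1 : fps_C 1 = 1.
Proof. by []. Qed.

Lemma unit_fps1D (f : fps) : f 0%N = 0 -> 1 + f \is a GRing.unit.
Proof. by move=> f0; rewrite unit_fpsE coef_fpsD f0 addr0 coef_fps1 oner_neq0. Qed.

Section ClosedForm.
Context {R : comUnitRingType} (v : R) (s : nat).

Local Notation K := (1 + v + v * v).
Local Notation D := ((1 - v) * (1 + v) ^+ s.+2).

(* [K * depth_num t / D] is the claimed series for the end level [i = s - t]: the two
   branches are the paper's formulas for [0 <= i] and for [i < 0]. *)
Definition depth_num (t : nat) : R :=
  if (t <= s)%N then v ^+ (s - t) * (1 + v) ^+ t * (1 - v ^+ t.+2)
  else v * (1 - v ^+ s.+1) * (1 + v) ^+ t.

Lemma depth_num0 : K * depth_num 0 = (0 == s)%:R * D + v * depth_num 1.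
Proof.
rewrite /depth_num; case: s => [|d] /=; rewrite ?subSS ?subn0 !exprS ?expr0; ring.
Qed.

Lemma depth_numS t :
  K * (depth_num t.+1 - depth_num t) =
  ((t.+1 == s)%:R - (t == s)%:R) * D + v * (depth_num t.+2 - depth_num t.+1 + depth_num t).
Proof.
rewrite /depth_num.
have [lt_ts|[le_st|<-]] : (t.+2 <= s \/ s <= t \/ t.+1 = s)%N by lia.
- have [-> -> ->] : [/\ (t <= s)%N, (t < s)%N & (t.+1 < s)%N] by do ?split; lia.
  have [-> ->] : (t.+1 == s) = false /\ (t == s) = false by split; lia.
  have -> : (s - t = (s - t.+2).+2)%N by lia.
  have -> : (s - t.+1 = (s - t.+2).+1)%N by lia.
  rewrite /= !exprS; ring.
- have [-> -> ->] : [/\ (t < s)%N = false, (t.+1 < s)%N = false & (t.+1 == s) = false].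
    by do ?split; lia.
  have [->|ne_ts] := eqVneq t s; first by rewrite leqnn subnn /= !exprS; ring.
  have -> : (t <= s)%N = false by lia.
  rewrite /= !exprS; ring.
- rewrite leqnSn ltnSn ltnn eqxx (ltn_eqF (ltnSn t)) subnn subSnn.
  rewrite /= !exprS; ring.
Qed.

Definition depth_gf (t : nat) : R := K * depth_num t / D.

Variable x : R.
Hypothesis xK : x * K = v.
Hypotheses (unit_1mv : 1 - v \is a GRing.unit) (unit_1pv : 1 + v \is a GRing.unit).

Let unit_1pvX k : (1 + v) ^+ k \is a GRing.unit.
Proof. exact: unitrX. Qed.

Let unit_1mv_1pvX k : (1 - v) * (1 + v) ^+ k \is a GRing.unit.
Proof. by rewrite unitrM unit_1mv unit_1pvX. Qed.

Lemma depth_gf_step (a b d : R) :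
  K * a = d * D + v * b -> K * a / D = d + x * (K * b / D).
Proof. by move=> ->; rewrite mulrDl mulrK ?unit_1mv_1pvX // -{1}xK -!mulrA. Qed.

Lemma depth_gf_rec t :
  depth_gf t = (t == s)%:R + x * (depth_gf t.+1 + \sum_(m < t) depth_gf m).
Proof.
elim: t => [|t IH].
  by rewrite big_ord0 addr0; apply: depth_gf_step; exact: depth_num0.
have step : depth_gf t.+1 - depth_gf t =
    ((t.+1 == s)%:R - (t == s)%:R) + x * (depth_gf t.+2 - depth_gf t.+1 + depth_gf t).
  rewrite /depth_gf -!mulrBl -mulrDl -!mulrBr -mulrDr.
  exact: depth_gf_step (depth_numS t).
rewrite -(subrK (depth_gf t) (depth_gf t.+1)) step big_ord_recr /= IH; ring.
Qed.

Lemma depth_gf_le t : (t <= s)%N ->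
  depth_gf t = v ^+ (s - t) * (1 - v ^+ t.+2) * K / ((1 - v) * (1 + v) ^+ (s - t).+2).
Proof.
move=> le_ts; rewrite /depth_gf /depth_num le_ts.
have -> : s.+2 = ((s - t).+2 + t)%N by lia.
rewrite exprD [X in _ / X]mulrA (invrM (unit_1mv_1pvX _) (unit_1pvX t)) mulrA.
congr (_ * _); rewrite -(mulrK (unit_1pvX t) (v ^+ (s - t) * _ * K)).
by congr (_ / _); ring.
Qed.

Lemma depth_gf_gt t : (s < t)%N ->
  depth_gf t = (1 + v) ^ (t%:Z - s%:Z - 2) * v * (1 - v ^+ s.+1) * K / (1 - v).
Proof.
move=> lt_st; rewrite /depth_gf /depth_num leqNgt lt_st /=.
have -> : t%:Z - s%:Z - 2 = t%:Z + - (s.+2)%:Z by lia.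
rewrite exprzDr // -exprnP -exprnN invrM ?unit_1pvX //; ring.
Qed.
End ClosedForm.

Lemma path_heights_rcons (q : seq int) y :
  path_heights (rcons q y) = rcons (path_heights q) (\sum_(z <- q) z + y).
Proof.
have foldl_add a (r : seq int) : foldl +%R a r = a + \sum_(z <- r) z.
  by elim: r a => [|z r IH] a /=; rewrite ?big_nil ?addr0 // IH big_cons addrA.
by rewrite /path_heights scanl_rcons foldl_add add0r big_rcons.
Qed.

Lemma mem_sum_path_heights (q : seq int) : \sum_(z <- q) z \in path_heights q.
Proof.
case/lastP: q => [|q y]; first by rewrite big_nil inE.
by rewrite path_heights_rcons mem_rcons inE big_rcons eqxx.
Qed.

Lemma bounded_deutsch_path_le {n : nat} {H i : int} {p : seq int} :
  bounded_deutsch_path n H i p -> i <= H.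
Proof. by case/and4P=> _ _ /allP bounded /eqP <-; apply/bounded/mem_sum_path_heights. Qed.

Lemma bounded_deutsch_path0 (H i : int) p :
  bounded_deutsch_path 0 H i p = [&& p == [::], 0 <= H & i == 0].
Proof. by case: p => [|z p]; rewrite /bounded_deutsch_path //= big_nil andbT eq_sym. Qed.

Lemma bounded_deutsch_path_rcons n (H i : int) q y :
  bounded_deutsch_path n.+1 H i (rcons q y) =
  [&& bounded_deutsch_path n H (i - y) q, deutsch_step y & i <= H].
Proof.
rewrite /bounded_deutsch_path size_rcons eqSS all_rcons path_heights_rcons all_rcons.
rewrite big_rcons /= -(can2_eq (addrK y) (subrK y)).
have [<-|_] := eqVneq (\sum_(z <- q) z + y) i; last by rewrite !andbF.
by case: (size q == n) (deutsch_step y) (all deutsch_step q) (_ + y <= H) (0 <= H)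
  (all _ (scanl _ _ _)) => [] [] [] [] [] [].
Qed.

Lemma deutsch_step_depth (x t : nat) :
  deutsch_step (x%:Z - t%:Z) = (x \in t.+1 :: iota 0 t).
Proof. by rewrite inE mem_iota add0n /deutsch_step; apply/orP/orP; case; lia. Qed.

Section BoundedPaths.
Variable h : nat.

Fixpoint bounded_paths_at (n t : nat) : seq (seq int) :=
  if n is n'.+1 then
    [seq rcons q (x%:Z - t%:Z) | x <- t.+1 :: iota 0 t, q <- bounded_paths_at n' x]
  else if t == h then [:: [::]] else [::].

Lemma mem_bounded_paths_at n t p :
  (p \in bounded_paths_at n t) = bounded_deutsch_path n h%:Z (h%:Z - t%:Z) p.
Proof.
elim: n t p => [|n IH] t p.
  rewrite bounded_deutsch_path0 /=; have [->|ne_th] := eqVneq t h.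
    by rewrite inE subrr eqxx andbT.
  by rewrite in_nil subr_eq0 eqz_nat [h == t]eq_sym (negbTE ne_th) !andbF.
case/lastP: p => [|q y].
  by apply/allpairsPdep => -[x [[|z q] [_ _]]].
rewrite bounded_deutsch_path_rcons.
apply/allpairsPdep/and3P => [[x [q' [xs qx /rcons_inj [-> ->]]]] | [bq sy _]].
  have -> : h%:Z - t%:Z - (x%:Z - t%:Z) = h%:Z - x%:Z by ring.
  by split; [rewrite -IH | rewrite deutsch_step_depth | lia].
have ty_ge0 : 0 <= t%:Z + y by have := bounded_deutsch_path_le bq; lia.
have tyE : (absz (t%:Z + y))%:Z = t%:Z + y by rewrite gez0_abs.
have ty_t : t%:Z + y - t%:Z = y by rewrite addrC addKr.
exists (absz (t%:Z + y)), q; split.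
- by rewrite -deutsch_step_depth tyE ty_t.
- by rewrite IH tyE opprD addrA.
- by rewrite tyE ty_t.
Qed.

Lemma uniq_bounded_paths_at n t : uniq (bounded_paths_at n t).
Proof.
elim: n t => [|n IH] t; first by rewrite /=; case: eqP.
apply: allpairs_uniq_dep => [||[x1 q1] [x2 q2] _ _ /= /rcons_inj [-> /eqP]].
- by rewrite /= iota_uniq mem_iota ltnNge leqnSn.
- by move=> x _; exact: IH.
- by rewrite (inj_eq (addIr _)) => /eqP [->].
Qed.

Lemma size_bounded_paths_atS n t :
  size (bounded_paths_at n.+1 t) =
  (size (bounded_paths_at n t.+1) + \sum_(x < t) size (bounded_paths_at n x))%N.
Proof.
rewrite size_allpairs_dep sumnE big_cons big_map.
by rewrite (_ : iota 0 t = index_iota 0 t) ?big_mkord // /index_iota subn0.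
Qed.
End BoundedPaths.

Lemma size_bounded_paths_at_coef {h : nat} {A : nat -> fps} :
  (forall t, A t = (t == h)%:R + fps_X * (A t.+1 + \sum_(m < t) A m)) ->
  forall n t, (size (bounded_paths_at h n t))%:R = A t n.
Proof.
move=> A_rec; elim=> [|n IH] t; rewrite A_rec coef_fpsD coef_fps_natr.
  by rewrite coef_fps_mulX0 addr0 mul1r /=; case: eqP.
rewrite coef_fps_mulXS coef_fpsD coef_fps_sum mul0r add0r.
by rewrite size_bounded_paths_atS natrD natr_sum IH; under eq_bigr do rewrite IH.
Qed.

Lemma is_count_size {T : eqType} {P : pred T} {c : rat} {s : seq T} :
  is_count P c -> uniq s -> s =i P -> c = (size s)%:R.
Proof.
case=> s' [uniq_s' s'P ->] uniq_s sP; congr _%:R.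
by apply/perm_size/uniq_perm => // p; rewrite sP s'P.
Qed.

Theorem theorem7 (h : nat) (i : int) (Phi v : fps) :
  i <= h%:Z ->
  (forall n, is_count (bounded_deutsch_path n h%:Z i) (Phi n)) ->
  v 0%N = 0 ->
  fps_X = fps_div v (fps_add (fps_add (fps_C 1) v) (fps_mul v v)) ->
  (i < 0 ->
     Phi =1 fps_div
       (fps_mul (fps_mul (fps_mul (fps_zpow (fps_add (fps_C 1) v) (- i - 2)) v)
                         (fps_sub (fps_C 1) (fps_pow v h.+1)))
                (fps_add (fps_add (fps_C 1) v) (fps_mul v v)))
       (fps_sub (fps_C 1) v)) /\
  (0 <= i ->
     Phi =1 fps_div
       (fps_mul (fps_mul (fps_zpow v i)
                         (fps_sub (fps_C 1) (fps_zpow v (2 - i + h%:Z))))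
                (fps_add (fps_add (fps_C 1) v) (fps_mul v v)))
       (fps_mul (fps_sub (fps_C 1) v) (fps_zpow (fps_add (fps_C 1) v) (i + 2)))).
Proof.
move=> i_le_h; have [t ->] : exists t : nat, i = h%:Z - t%:Z.
  by exists (absz (h%:Z - i)); rewrite gez0_abs; lia.
move=> count_Phi v0 X_eq.
rewrite !fps_mulE !fps_addE !fps_subE fps_C1 in X_eq *.
have unit_1pv : 1 + v \is a GRing.unit by apply: unit_fps1D.
have unit_1mv : 1 - v \is a GRing.unit by apply: unit_fps1D; rewrite coef_fpsN v0 oppr0.
have unit_K : 1 + v + v * v \is a GRing.unit.
  by rewrite -addrA; apply: unit_fps1D; rewrite coef_fpsD coef0_fpsM v0 mulr0 addr0.
have XK : fps_X * (1 + v + v * v) = v by rewrite X_eq fps_divE // divrK.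
have Phi_gf n : Phi n = depth_gf v h t n.
  rewrite -(size_bounded_paths_at_coef (depth_gf_rec v h fps_X XK unit_1mv unit_1pv)).
  exact: is_count_size (count_Phi n) (uniq_bounded_paths_at h n t) (mem_bounded_paths_at h n t).
split=> [lt_i0|ge_i0] n; rewrite Phi_gf.
- rewrite depth_gf_gt //; last by lia.
  have -> : - (h%:Z - t%:Z) - 2 = t%:Z - h%:Z - 2 by ring.
  by rewrite fps_divE // fps_zpowE // fps_powE.
- rewrite depth_gf_le //; last by lia.
  have -> : h%:Z - t%:Z = Posz (h - t) by lia.
  have -> : 2 - Posz (h - t) + h%:Z = Posz t.+2 by lia.
  have -> : Posz (h - t) + 2 = Posz (h - t).+2 by lia.
  by rewrite !fps_zpow_nat fps_divE // unitrM unit_1mv unitrX.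
Qed.
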